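(* Let $x$ be a random vector in $\mathbb{R}^n$ (the data), let $e: \mathbb{R}^n \to \mathbb{R}^m$ be a measurable map (encoder) and $g: \mathbb{R}^m \to \mathbb{R}^n$ a $K$-Lipschitz map with respect to the Euclidean norms (decoder). Let $z = e(x)$, assume $z$ has finite second moments and $\mathbb{E}\|x - g(z)\|_2 < \infty$, and let $\bar z_i = \mathbb{E}[z_i]$ and $\sigma_i$ be the standard deviation of $z_i$. Let $P \subseteq \{1,\dots,m\}$ and define the pruned code $\tilde z_P$ by $[\tilde z_P]_i = z_i$ for $i \notin P$ and $[\tilde z_P]_i = \bar z_i$ for $i \in P$. Let $\epsilon = \mathbb{E}\|x - g(z)\|_2$ and $\tilde\epsilon = \mathbb{E}\|x - g(\tilde z_P)\|_2$. Then $$\tilde\epsilon - \epsilon \le K\sqrt{\sum_{i\in P} \sigma_i^2}.$$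
   Context: $\epsilon$ is the $L_2$ reconstruction error of the autoencoder, and $\tilde\epsilon$ the $L_2$ reconstruction error after pruning (fixing at their means) the latent dimensions indexed by $P$. *)

From HB Require Import structures.
From mathcomp Require Import all_boot all_order all_algebra.
From mathcomp Require Import all_classical all_reals all_analysis.
Set Implicit Arguments. Unset Strict Implicit. Unset Printing Implicit Defensive.
Import Order.TTheory GRing.Theory Num.Theory.
Local Open Scope ring_scope.

(* R^n is represented by n.-tuple R, which mathcomp-analysis equips with the
   product sigma-algebra (generated by the coordinate projections). *)

Section Defs.
Variable R : realType.

Definition enorm n (v : n.-tuple R) : R :=
  Num.sqrt (\sum_(i < n) tnth v i ^+ 2).

Definition tsub n (u v : n.-tuple R) : n.-tuple R :=
  [tuple tnth u i - tnth v i | i < n].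

Definition lipschitz_eucl m n (K : R) (f : m.-tuple R -> n.-tuple R) : Prop :=
  forall u v, enorm (tsub (f u) (f v)) <= K * enorm (tsub u v).

Definition prune m (P : {set 'I_m}) (zbar z : m.-tuple R) : m.-tuple R :=
  [tuple if i \in P then tnth zbar i else tnth z i | i < m].
End Defs.

(* Pointwise, the triangle inequality and the Lipschitz bound give
   ||x - g(z~)|| <= ||x - g(z)|| + K sqrt S,  with S = sum_(i in P) (z_i - zbar_i)^2,
   and E[S] = sum_(i in P) sigma_i^2.  Integrating and applying Jensen's inequality
   E[sqrt S] <= sqrt E[S] for the concave square root yields the bound.  If K < 0,
   the Lipschitz condition 0 <= K ||u - v|| forces S = 0 and both sides vanish. *)

From HB Require Import structures.
From mathcomp Require Import all_boot all_order all_algebra.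
From mathcomp Require Import all_classical all_reals all_analysis.
From mathcomp Require Import ring lra.
Set Implicit Arguments. Unset Strict Implicit. Unset Printing Implicit Defensive.
Import Order.TTheory GRing.Theory Num.Theory.
Local Open Scope ring_scope.

Section euclidean_norm.
Variable R : realType.

Lemma cauchy_schwarz_sum n (a b : 'I_n -> R) :
  (\sum_i a i * b i) ^+ 2 <= (\sum_i a i ^+ 2) * (\sum_i b i ^+ 2).
Proof.
set A := \sum_i a i ^+ 2; set B := \sum_i b i ^+ 2; set C := \sum_i a i * b i.
have lagrange :
    \sum_i \sum_j (a i * b j - a j * b i) ^+ 2 = A * B + B * A - 2 * (C * C).
  rewrite /A /B /C !big_distrlr /= mulr_sumr -big_split -sumrB.
  apply: eq_bigr => i _; rewrite mulr_sumr -big_split -sumrB.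
  by apply: eq_bigr => j _ /=; ring.
have : 0 <= \sum_i \sum_j (a i * b j - a j * b i) ^+ 2.
  by apply: sumr_ge0 => i _; apply: sumr_ge0 => j _; exact: sqr_ge0.
by rewrite lagrange expr2 (mulrC B A); lra.
Qed.

Lemma minkowski_sum n (a b : 'I_n -> R) :
  Num.sqrt (\sum_i (a i + b i) ^+ 2) <=
  Num.sqrt (\sum_i a i ^+ 2) + Num.sqrt (\sum_i b i ^+ 2).
Proof.
set A := \sum_i a i ^+ 2; set B := \sum_i b i ^+ 2; set C := \sum_i a i * b i.
have A0 : 0 <= A by apply: sumr_ge0 => i _; exact: sqr_ge0.
have B0 : 0 <= B by apply: sumr_ge0 => i _; exact: sqr_ge0.
have sumE : \sum_i (a i + b i) ^+ 2 = A + B + 2 * C.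
  by rewrite /A /B /C mulr_sumr -!big_split; apply: eq_bigr => i _ /=; ring.
have CAB : C <= Num.sqrt A * Num.sqrt B.
  rewrite -sqrtrM // (le_trans (ler_norm C)) // -sqrtr_sqr ler_sqrt ?mulr_ge0 //.
  exact: cauchy_schwarz_sum.
rewrite -[leRHS]ger0_norm ?addr_ge0 ?sqrtr_ge0 // -sqrtr_sqr ler_sqrt ?sqr_ge0 //.
by rewrite sumE sqrrD !sqr_sqrtr // -mulr_natr; lra.
Qed.

Lemma enorm_ge0 n (u : n.-tuple R) : 0 <= enorm u.
Proof. exact: sqrtr_ge0. Qed.

Lemma enorm_tsub_triangle n (u v w : n.-tuple R) :
  enorm (tsub u w) <= enorm (tsub u v) + enorm (tsub v w).
Proof.
have := minkowski_sum (fun i => tnth u i - tnth v i) (fun i => tnth v i - tnth w i).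
rewrite /enorm; congr (_ <= _ + _); congr Num.sqrt;
  by apply: eq_bigr => i _; rewrite !tnth_mktuple // subrKA.
Qed.

Lemma enorm_tsub_prune m (P : {set 'I_m}) (c u : m.-tuple R) :
  enorm (tsub u (prune P c u)) = Num.sqrt (\sum_(i in P) (tnth u i - tnth c i) ^+ 2).
Proof.
rewrite /enorm [in RHS]big_mkcond; congr Num.sqrt; apply: eq_bigr => i _.
by rewrite !tnth_mktuple; case: ifP => // _; rewrite subrr expr0n.
Qed.

Section lipschitz.
Variables (m n : nat) (K : R) (f : m.-tuple R -> n.-tuple R).
Hypothesis f_lip : lipschitz_eucl K f.

Lemma lipschitz_eucl_bound_ge0 (u v : m.-tuple R) : 0 <= K * enorm (tsub u v).
Proof. exact: le_trans (enorm_ge0 _) (f_lip u v). Qed.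

Lemma enorm_tsub_lipschitz (y : n.-tuple R) (u v : m.-tuple R) :
  enorm (tsub y (f v)) <= enorm (tsub y (f u)) + K * enorm (tsub u v).
Proof. by rewrite (le_trans (enorm_tsub_triangle _ (f u) _)) // lerD2l f_lip. Qed.

End lipschitz.
End euclidean_norm.

Local Open Scope ereal_scope.

Section integral_le.
Context d (T : measurableType d) (R : realType).
Variable mu : {measure set T -> \bar R}.

(* No measurability is needed: the integral of a nonnegative function is a
   supremum over the simple functions below it. *)
Lemma ge0_le_integralT (f g : T -> \bar R) :
  (forall x, 0 <= f x) -> (forall x, f x <= g x) ->
  \int[mu]_x f x <= \int[mu]_x g x.
Proof.
move=> f0 fg; have g0 x : 0 <= g x := le_trans (f0 x) (fg x).
rewrite !ge0_integralTE //; apply: ereal_sup_le => _ [h hf <-]; exists h => //.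
by move=> x; exact: le_trans (hf x) (fg x).
Qed.

End integral_le.

Section expectation_lemmas.
Context d (T : measurableType d) (R : realType) (P : probability T R).

Lemma Lfun1_sumr (I : finType) (A : {set I}) (F : I -> T -> R) :
  (forall i, F i \in Lfun P 1) -> (fun w => \sum_(i in A) F i w)%R \in Lfun P 1.
Proof.
move=> F1; have -> : (fun w => \sum_(i in A) F i w)%R = (\sum_(i in A) F i)%R.
  by apply/funext => w; rewrite fct_sumE.
by apply: rpred_sum => i _; exact: F1.
Qed.

Lemma expectation_sumr (I : finType) (A : {set I}) (F : I -> T -> R) :
  (forall i, F i \in Lfun P 1) ->
  'E_P[(fun w => \sum_(i in A) F i w)%R] = \sum_(i in A) 'E_P[F i].
Proof.
move=> F1; have -> : (fun w => \sum_(i in A) F i w)%R = (\sum_(i in A) F i)%R.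
  by apply/funext => w; rewrite fct_sumE.
rewrite -big_enum -[in RHS]big_enum /= -(big_map F xpredT id) expectation_sum.
  by rewrite big_map.
by move=> _ /mapP[i _ ->]; exact: F1.
Qed.

Lemma variance_centered (X : T -> R) :
  'V_P[X] = 'E_P[(fun w => (X w - fine 'E_P[X]) ^+ 2)%R].
Proof. by rewrite /variance unlock. Qed.

Lemma Lfun1_sqr_centered (X : T -> R) (c : R) :
  X \in Lfun P 2%:E -> (fun w => (X w - c) ^+ 2)%R \in Lfun P 1.
Proof.
move=> X2; apply: Lfun2_mul_Lfun1;
  by apply: rpredB; rewrite ?lee_fin ?ler1n // => ?; exact: Lfun_cst.
Qed.

Lemma expectation_sum_sqr_centered (I : finType) (A : {set I}) (X : I -> T -> R) :
  (forall i, X i \in Lfun P 2%:E) ->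
  'E_P[(fun w => \sum_(i in A) (X i w - fine 'E_P[X i]) ^+ 2)%R] =
  (\sum_(i in A) fine 'V_P[X i])%:E.
Proof.
move=> X2; rewrite expectation_sumr => [|i]; last exact: Lfun1_sqr_centered.
rewrite -sumEFin; apply: eq_bigr => i _.
by rewrite fineK ?variance_fin_num // variance_centered.
Qed.

Lemma Lfun1_sqrt (S : T -> R) :
  (forall w, 0 <= S w)%R -> S \in Lfun P 1 -> (Num.sqrt \o S) \in Lfun P 1.
Proof.
move=> S0 S1; have mS : measurable_fun setT S by have := sub_Lfun_mfun S1; rewrite inE.
have S1' : (cst 1 \+ S)%R \in Lfun P 1 by apply: rpredD => //; exact: Lfun_cst.
apply/Lfun1_integrable.
apply: (le_integrable (g := EFin \o (cst 1 \+ S)%R) measurableT);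
  last exact/Lfun1_integrable.
- apply/measurable_realfun.measurable_EFinP; apply: measurableT_comp mS.
  exact: measurable_realfun.continuous_measurable_fun (@sqrt_continuous R).
- move=> w _ /=; rewrite lee_fin !ger0_norm ?sqrtr_ge0 ?addr_ge0 //.
  have := sqr_sqrtr (S0 w); have := sqrtr_ge0 (S w); nra.
Qed.

Lemma expectation_sqrt_le (S : T -> R) :
  (forall w, 0 <= S w)%R -> S \in Lfun P 1 ->
  'E_P[Num.sqrt \o S] <= (Num.sqrt (fine 'E_P[S]))%:E.
Proof.
move=> S0 S1; have D1 := Lfun1_sqrt S0 S1.
set D := Num.sqrt \o S; set a := fine 'E_P[D].
have ED : 'E_P[D] = a%:E by rewrite fineK //; exact: expectation_fin_num.
have ES : 'E_P[S] = (fine 'E_P[S])%:E by rewrite fineK //; exact: expectation_fin_num.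
have a0 : (0 <= a)%R by apply/fine_ge0/expectation_ge0 => w; exact: sqrtr_ge0.
(* AM-GM: [2 a D <= D^2 + a^2] pointwise; taking expectations gives [a^2 <= E S]. *)
have : 'E_P[((2 * a) \o* D)%R] <= 'E_P[(S \+ cst (a ^+ 2))%R].
  rewrite unlock; apply: le_integral => //.
  - by apply/Lfun1_integrable/Lfun_scale.
  - by apply/Lfun1_integrable/rpredD => //; exact: Lfun_cst.
  move=> w _ /=; rewrite lee_fin; have := sqr_sqrtr (S0 w).
  by have := sqr_ge0 (D w - a); rewrite sqrrB /D /=; nra.
rewrite expectationZl // expectationD //; last exact: Lfun_cst.
rewrite ED ES expectation_cst -EFinM -EFinD !lee_fin => le2a.
by rewrite /= -(ger0_norm a0) -sqrtr_sqr ler_sqrt ?sqr_ge0; nra.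
Qed.

Lemma expectationZ_sqrt_le (K : R) (S : T -> R) :
  (forall w, 0 <= S w)%R -> S \in Lfun P 1 -> (forall w, 0 <= K * Num.sqrt (S w))%R ->
  'E_P[(K \o* (Num.sqrt \o S))%R] <= (K * Num.sqrt (fine 'E_P[S]))%:E.
Proof.
move=> S0 S1 KS0; have [K0|K0] := leP 0%R K.
  rewrite expectationZl ?Lfun1_sqrt // EFinM lee_wpmul2l ?lee_fin //.
  exact: expectation_sqrt_le.
have S_eq0 : S = cst 0%R.
  apply/funext => w; apply/eqP; rewrite eq_le S0 andbT -sqrtr_eq0 eq_le sqrtr_ge0 andbT.
  by have := KS0 w; nra.
have -> : (K \o* (Num.sqrt \o S))%R = cst 0%R.
  by apply/funext => w; rewrite S_eq0 /= sqrtr0 mul0r.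
by rewrite S_eq0 !expectation_cst sqrtr0 mulr0.
Qed.

Lemma ge0_integral_leD (f h k : T -> R) :
  (forall w, 0 <= f w)%R -> (forall w, f w <= h w + k w)%R ->
  P.-integrable setT (EFin \o h) -> k \in Lfun P 1 ->
  \int[P]_w (f w)%:E <= \int[P]_w (h w)%:E + 'E_P[k].
Proof.
move=> f0 fhk h1 /Lfun1_integrable k1; rewrite unlock -integralD_EFin //.
by apply: ge0_le_integralT => w; rewrite lee_fin.
Qed.

End expectation_lemmas.

Theorem theorem3 (R : realType) (d : measure_display) (Omega : measurableType d)
  (Pr : probability Omega R) (n m : nat)
  (x : Omega -> n.-tuple R) (e : n.-tuple R -> m.-tuple R)
  (g : m.-tuple R -> n.-tuple R) (K : R) (P : {set 'I_m}) :
  measurable_fun setT x ->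
  measurable_fun setT e ->
  lipschitz_eucl K g ->
  (forall i : 'I_m, (fun w => tnth (e (x w)) i) \in Lfun Pr 2%:E) ->
  Pr.-integrable setT (fun w => (enorm (tsub (x w) (g (e (x w)))))%:E) ->
  let z := fun w => e (x w) in
  let zbar : m.-tuple R := [tuple fine 'E_Pr[fun w => tnth (z w) i] | i < m] in
  let sigma := fun i : 'I_m => Num.sqrt (fine 'V_Pr[fun w => tnth (z w) i]) in
  let eps := \int[Pr]_w (enorm (tsub (x w) (g (z w))))%:E in
  let eps_t := \int[Pr]_w (enorm (tsub (x w) (g (prune P zbar (z w)))))%:E in
  eps_t - eps <= (K * Num.sqrt (\sum_(i in P) sigma i ^+ 2))%:E.
Proof.
(* the [let]s sit inside the boolean [<=], so they are unfolded, not introduced *)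
move=> _ _ g_lip z2 err1; cbv zeta beta.
set zbar := [tuple _ | i < m].
pose Z i w := tnth (e (x w)) i.
pose S w := (\sum_(i in P) (Z i w - fine 'E_Pr[Z i]) ^+ 2)%R.
have S0 w : (0 <= S w)%R by apply: sumr_ge0 => i _; exact: sqr_ge0.
have S1 : S \in Lfun Pr 1 := Lfun1_sumr P (fun i => Lfun1_sqr_centered _ (z2 i)).
have ES : (\sum_(i in P) Num.sqrt (fine 'V_Pr[Z i]) ^+ 2)%R = fine 'E_Pr[S].
  rewrite expectation_sum_sqr_centered //=; apply: eq_bigr => i _.
  by rewrite sqr_sqrtr // fine_ge0 // variance_ge0.
have SE w : Num.sqrt (S w) = enorm (tsub (e (x w)) (prune P zbar (e (x w)))).
  by rewrite enorm_tsub_prune; congr Num.sqrt; apply: eq_bigr => i _; rewrite tnth_mktuple.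
rewrite ES leeBlDr ?integrable_fin_num // addeC.
have KD1 : (K \o* (Num.sqrt \o S))%R \in Lfun Pr 1 by apply/Lfun_scale/Lfun1_sqrt.
apply: le_trans (ge0_integral_leD _ _ err1 KD1) _ => /= [w|w|].
- exact: enorm_ge0.
- by rewrite mulrC SE (enorm_tsub_lipschitz g_lip).
rewrite leeD2l // expectationZ_sqrt_le // => w.
by rewrite SE (lipschitz_eucl_bound_ge0 g_lip).
Qed.
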